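(* Let $e_1,e_2,e_3$ be nonzero integers with $e_1+e_2+e_3=0$, $2\,\|\,e_1$, $2\,\|\,e_2$, $4\mid e_3$. Let $n$ be an odd positive square-free integer and $\Lambda=(d_1,d_2,d_3)$ with $d_1,d_2,d_3$ odd square-free divisors of $e_1e_2e_3n$ and $d_1d_2d_3$ a square. If $D^{(n)}_\Lambda(\mathbb{Q}_2)\ne\emptyset$, then $d_3\equiv 1\pmod 4$.
   Context: $D^{(n)}_\Lambda\subset\mathbb{P}^3$ (coordinates $(t,u_1,u_2,u_3)$) is defined by $e_1nt^2+d_2u_2^2-d_3u_3^2=0$, $e_2nt^2+d_3u_3^2-d_1u_1^2=0$, $e_3nt^2+d_1u_1^2-d_2u_2^2=0$. $2\,\|\,m$ means $2\mid m$, $4\nmid m$. *)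

From mathcomp Require Import all_boot all_order all_algebra.
Set Implicit Arguments. Unset Strict Implicit. Unset Printing Implicit Defensive.
Import Order.TTheory GRing.Theory Num.Theory.
Local Open Scope ring_scope.

Definition exactly2 (m : int) : bool := (2 %| m)%Z && ~~ (4 %| m)%Z.

Definition sqfree_int (z : int) : Prop :=
  forall p : nat, prime p -> ~~ (p * p %| `|z|)%N.

Definition odd_int (z : int) : bool := odd `|z|%N.

Definition is_square_int (z : int) : Prop := exists m : int, z = m ^+ 2.

(* 2-adic integers Z_2 = lim Z/2^k Z, represented by coherent sequences
   (x k) of integer representatives of the residues modulo 2^k. *)
Definition coherent2 (x : nat -> int) : Prop :=
  forall k : nat, (x k.+1 == x k %[mod (2 ^ k)%N%:Z])%Z.

Definition zero2 (x : nat -> int) : Prop :=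
  forall k : nat, (x k == 0 %[mod (2 ^ k)%N%:Z])%Z.

(* The three quadratic forms defining D^(n)_Lambda in P^3 with coordinates
   (t,u1,u2,u3). *)
Definition Dq1 (n e1 d1 d2 d3 t u1 u2 u3 : int) : int :=
  e1 * n * t ^+ 2 + d2 * u2 ^+ 2 - d3 * u3 ^+ 2.
Definition Dq2 (n e2 d1 d2 d3 t u1 u2 u3 : int) : int :=
  e2 * n * t ^+ 2 + d3 * u3 ^+ 2 - d1 * u1 ^+ 2.
Definition Dq3 (n e3 d1 d2 d3 t u1 u2 u3 : int) : int :=
  e3 * n * t ^+ 2 + d1 * u1 ^+ 2 - d2 * u2 ^+ 2.

(* D^(n)_Lambda(Q_2) <> empty : every point of P^3(Q_2) has a representative
   in Z_2^4 \ {0}; so we ask for a nonzero 4-tuple of 2-adic integers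
   satisfying the three equations in Z_2 (i.e. modulo 2^k for every k). *)
Definition D_has_Q2_point (n e1 e2 e3 d1 d2 d3 : int) : Prop :=
  exists t u1 u2 u3 : nat -> int,
    [/\ coherent2 t, coherent2 u1, coherent2 u2 & coherent2 u3] /\
    ~ (zero2 t /\ zero2 u1 /\ zero2 u2 /\ zero2 u3) /\
    forall k : nat,
      [/\ (Dq1 n e1 d1 d2 d3 (t k) (u1 k) (u2 k) (u3 k) == 0 %[mod (2 ^ k)%N%:Z])%Z,
          (Dq2 n e2 d1 d2 d3 (t k) (u1 k) (u2 k) (u3 k) == 0 %[mod (2 ^ k)%N%:Z])%Z &
          (Dq3 n e3 d1 d2 d3 (t k) (u1 k) (u2 k) (u3 k) == 0 %[mod (2 ^ k)%N%:Z])%Z].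

(* A nonzero 2-adic point can be scaled to an integral solution of the three
   equations modulo 4 whose coordinates are not all even: the forms are
   homogeneous quadratic, so a solution with only even coordinates can be
   halved at the cost of a factor 4 in the modulus.  Modulo 4 a square is 0 or
   1 according to parity, e1 n = 2 and e3 n = 0; comparing parities in the
   first and third equations forces u1 and u2 to be odd, and the third equation
   then reads d1 = d2 (mod 4).  Hence d3 = d1^2 d3 = d1 d2 d3 (mod 4), the
   square of an odd number, which is 1 modulo 4. *)

From mathcomp Require Import all_boot all_order all_algebra.
From mathcomp Require Import ring zify.
From Stdlib Require Import Classical.

Set Implicit Arguments.
Unset Strict Implicit.
Unset Printing Implicit Defensive.

Import Order.TTheory GRing.Theory Num.Theory.
Local Open Scope ring_scope.

Definition diag_form (a b c t x y : int) : int := a * t ^+ 2 + b * x ^+ 2 - c * y ^+ 2.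

Lemma Dq1E n e1 d1 d2 d3 t u1 u2 u3 :
  Dq1 n e1 d1 d2 d3 t u1 u2 u3 = diag_form (e1 * n) d2 d3 t u2 u3.
Proof. by []. Qed.

Lemma Dq2E n e2 d1 d2 d3 t u1 u2 u3 :
  Dq2 n e2 d1 d2 d3 t u1 u2 u3 = diag_form (e2 * n) d3 d1 t u3 u1.
Proof. by []. Qed.

Lemma Dq3E n e3 d1 d2 d3 t u1 u2 u3 :
  Dq3 n e3 d1 d2 d3 t u1 u2 u3 = diag_form (e3 * n) d1 d2 t u1 u2.
Proof. by []. Qed.

Lemma diag_formZ a b c t x y (k : int) :
  diag_form a b c (k * t) (k * x) (k * y) = k ^+ 2 * diag_form a b c t x y.
Proof. by rewrite /diag_form; ring. Qed.

Lemma odd_intE (z : int) : odd_int z = ~~ (2 %| z)%Z.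
Proof. by rewrite dvdzE /odd_int /= dvdn2 negbK. Qed.

Lemma odd_intM (x y : int) : odd_int (x * y) = odd_int x && odd_int y.
Proof. by rewrite /odd_int abszM oddM. Qed.

Lemma sqrz_mod4 (x : int) : (x ^+ 2 == odd_int x %[mod 4])%Z.
Proof. by rewrite odd_intE expr2; case: (boolP (2 %| x)%Z) => /= x_even; nia. Qed.

Lemma mulr_sqrz_mod4 (a x : int) : (a * x ^+ 2 == a * odd_int x %[mod 4])%Z.
Proof. by rewrite eqz_mod_dvd -mulrBr dvdz_mull // -eqz_mod_dvd sqrz_mod4. Qed.

Lemma dvd4_diag_form (a b c t x y : int) :
  (4 %| diag_form a b c t x y)%Z =
  (4 %| a * (odd_int t)%:Z + b * (odd_int x)%:Z - c * (odd_int y)%:Z)%Z.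
Proof.
have sqr_dvd w z : (4 %| w * (z ^+ 2 - (odd_int z)%:Z))%Z.
  by rewrite mulrBr -eqz_mod_dvd mulr_sqrz_mod4.
rewrite -[diag_form _ _ _ _ _ _](subrK (a * (odd_int t)%:Z + b * (odd_int x)%:Z
  - c * (odd_int y)%:Z)) rpredDl //.
rewrite (_ : _ - _ = a * (t ^+ 2 - (odd_int t)%:Z) + b * (x ^+ 2 - (odd_int x)%:Z)
  - c * (y ^+ 2 - (odd_int y)%:Z)); last by rewrite /diag_form; ring.
by apply: rpredB; [apply: rpredD|]; apply: sqr_dvd.
Qed.

Lemma exactly2_mul_odd_mod4 (e n : int) : exactly2 e -> odd_int n -> (e * n == 2 %[mod 4])%Z.
Proof.
move=> /andP[e_even e_not4]; have /(dvdz_mulr n) : (4 %| e - 2)%Z by lia.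
by rewrite mulrBl odd_intE => {e_even e_not4}; lia.
Qed.

Definition dvdz4 (m t u1 u2 u3 : int) : bool :=
  [&& (m %| t)%Z, (m %| u1)%Z, (m %| u2)%Z & (m %| u3)%Z].

Lemma primitive_diag_forms_mod4 (a1 a3 d1 d2 d3 t u1 u2 u3 : int) :
  (a1 == 2 %[mod 4])%Z -> (4 %| a3)%Z ->
  odd_int d1 -> odd_int d2 -> odd_int d3 ->
  (4 %| diag_form a1 d2 d3 t u2 u3)%Z -> (4 %| diag_form a3 d1 d2 t u1 u2)%Z ->
  ~~ dvdz4 2 t u1 u2 u3 -> (d1 == d2 %[mod 4])%Z.
Proof.
rewrite !dvd4_diag_form /dvdz4 !odd_intE.
by case: (2 %| t)%Z; case: (2 %| u1)%Z; case: (2 %| u2)%Z; case: (2 %| u3)%Z => /=; lia.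
Qed.

Lemma square_prod3_mod4 (d1 d2 d3 m : int) :
  odd_int d1 -> odd_int d3 -> (d1 == d2 %[mod 4])%Z -> d1 * d2 * d3 = m ^+ 2 ->
  (d3 == 1 %[mod 4])%Z.
Proof.
move=> d1_odd d3_odd d12 dm.
have d2_odd : odd_int d2 by move: d1_odd d12; rewrite !odd_intE; lia.
have m_odd : odd_int m.
  by rewrite -[odd_int m]andbb -odd_intM -expr2 -dm !odd_intM d1_odd d2_odd.
have := sqrz_mod4 m; rewrite -dm m_odd => /eqP prod_mod4.
have := mulr_sqrz_mod4 d3 d1; rewrite d1_odd => /eqP d3_mod4.
have : (4 %| d1 * d3 * (d2 - d1))%Z by apply: dvdz_mull; rewrite -eqz_mod_dvd eq_sym.
lia.
Qed.

Section Descent.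

Variables (n e1 e2 e3 d1 d2 d3 : int).

Definition D_sol_mod (M t u1 u2 u3 : int) : Prop :=
  [/\ (M %| Dq1 n e1 d1 d2 d3 t u1 u2 u3)%Z,
      (M %| Dq2 n e2 d1 d2 d3 t u1 u2 u3)%Z &
      (M %| Dq3 n e3 d1 d2 d3 t u1 u2 u3)%Z].

Lemma D_sol_mod_dvd M M' t u1 u2 u3 :
  (M' %| M)%Z -> D_sol_mod M t u1 u2 u3 -> D_sol_mod M' t u1 u2 u3.
Proof. by move=> M'M [q1 q2 q3]; split; apply: dvdz_trans M'M _. Qed.

Lemma D_sol_modZ (k : int) M t u1 u2 u3 : k != 0 ->
  D_sol_mod (k ^+ 2 * M) (k * t) (k * u1) (k * u2) (k * u3) -> D_sol_mod M t u1 u2 u3.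
Proof.
move=> k_neq0; have k2_neq0 : k ^+ 2 != 0 by rewrite expf_neq0.
by case; rewrite /D_sol_mod !(Dq1E, Dq2E, Dq3E) !diag_formZ !dvdz_mul2l.
Qed.

Lemma D_sol_mod_primitive k t u1 u2 u3 :
  D_sol_mod ((2 ^ k)%N%:Z ^+ 2) t u1 u2 u3 -> ~~ dvdz4 (2 ^ k)%N t u1 u2 u3 ->
  exists t' u1' u2' u3', D_sol_mod 4 t' u1' u2' u3' /\ ~~ dvdz4 2 t' u1' u2' u3'.
Proof.
elim: k t u1 u2 u3 => [|k IHk] t u1 u2 u3 sol; first by rewrite /dvdz4 !dvd1z.
have [/and4P[t_even u1_even u2_even u3_even] | primitive _] := boolP (dvdz4 2 t u1 u2 u3).
  move: sol; rewrite -(divzK t_even) -(divzK u1_even) -(divzK u2_even) -(divzK u3_even).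
  rewrite expnS PoszM /dvdz4 !(mulrC _ 2) !dvdz_mul2l //.
  move=> sol; apply: IHk; apply: (@D_sol_modZ 2) => //.
  by rewrite -exprMn.
exists t, u1, u2, u3; split => //; apply: D_sol_mod_dvd sol.
by rewrite (_ : 4 = 2 ^+ 2) // dvdz_exp2r // expnS PoszM dvdz_mulr.
Qed.

End Descent.

Lemma coherent2_mod (x : nat -> int) k j : coherent2 x -> (k <= j)%N ->
  (x j == x k %[mod (2 ^ k)%N%:Z])%Z.
Proof.
move=> cx; elim: j => [|j IHj]; first by rewrite leqn0 => /eqP->.
rewrite leq_eqVlt => /predU1P[-> // | le_kj].
have := IHj le_kj; have := cx j; rewrite !eqz_mod_dvd => xj1j xjk.
rewrite -[x j.+1](subrK (x j)) -addrA rpredD // (dvdz_trans _ xj1j) //.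
by rewrite dvdzE; apply: dvdn_exp2l.
Qed.

Lemma coherent2_zero (x : nat -> int) : coherent2 x ->
  (forall k, ((2 ^ k)%N%:Z %| x (k + k)%N)%Z) -> zero2 x.
Proof.
move=> cx dx k; have := coherent2_mod cx (leq_addr k k).
rewrite !eqz_mod_dvd subr0 => xkk.
by rewrite -[x k](subKr (x (k + k)%N)) rpredB.
Qed.

(* At level k + k the equations hold modulo (2^k)^2, while x_(k+k) = x_k
   (mod 2^k) keeps a coordinate that is nonzero modulo 2^k. *)
Lemma Q2_point_primitive_level (t u1 u2 u3 : nat -> int) :
  coherent2 t -> coherent2 u1 -> coherent2 u2 -> coherent2 u3 ->
  ~ (zero2 t /\ zero2 u1 /\ zero2 u2 /\ zero2 u3) ->
  exists k, ~~ dvdz4 (2 ^ k)%N (t (k + k)%N) (u1 (k + k)%N) (u2 (k + k)%N) (u3 (k + k)%N).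
Proof.
move=> ct cu1 cu2 cu3 nonzero; apply: NNPP => none; apply: nonzero.
have dvd_all k : dvdz4 (2 ^ k)%N (t (k + k)%N) (u1 (k + k)%N) (u2 (k + k)%N) (u3 (k + k)%N).
  by apply/negPn/negP => ndvd; apply: none; exists k.
by split; [|split; [|split]]; apply: coherent2_zero => // k; case/and4P: (dvd_all k).
Qed.

Theorem lemma4p1 (e1 e2 e3 n d1 d2 d3 : int) :
  e1 != 0 -> e2 != 0 -> e3 != 0 -> e1 + e2 + e3 = 0 ->
  exactly2 e1 -> exactly2 e2 -> (4 %| e3)%Z ->
  0 < n -> odd_int n -> sqfree_int n ->
  odd_int d1 -> sqfree_int d1 -> (d1 %| e1 * e2 * e3 * n)%Z ->
  odd_int d2 -> sqfree_int d2 -> (d2 %| e1 * e2 * e3 * n)%Z ->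
  odd_int d3 -> sqfree_int d3 -> (d3 %| e1 * e2 * e3 * n)%Z ->
  is_square_int (d1 * d2 * d3) ->
  D_has_Q2_point n e1 e2 e3 d1 d2 d3 ->
  (d3 == 1 %[mod 4])%Z.
Proof.
move=> _ _ _ _ e1_2 _ e3_4 _ n_odd _ d1_odd _ _ d2_odd _ _ d3_odd _ _ [m dm].
move=> [t [u1 [u2 [u3 [[ct cu1 cu2 cu3] [nonzero sol]]]]]].
have [k primitive] := Q2_point_primitive_level ct cu1 cu2 cu3 nonzero.
have sol_k : D_sol_mod n e1 e2 e3 d1 d2 d3 ((2 ^ k)%N%:Z ^+ 2)
    (t (k + k)%N) (u1 (k + k)%N) (u2 (k + k)%N) (u3 (k + k)%N).
  by case: (sol (k + k)%N); rewrite !eqz_mod_dvd !subr0 expnD PoszM -expr2.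
have [t' [u1' [u2' [u3' [[sol1 _ sol3] primitive']]]]] := D_sol_mod_primitive sol_k primitive.
apply: square_prod3_mod4 dm => //.
apply: primitive_diag_forms_mod4 sol1 sol3 primitive' => //.
  exact: exactly2_mul_odd_mod4.
exact: dvdz_mulr.
Qed.
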